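(* Let $X=\{0,1,2,3\}$ and let $a,b,c$ be the transformations of $X^\ast$ defined recursively (with $\emptyset\mapsto\emptyset$) by $a(0w)=1\,a(w)$, $a(1w)=0w$, $a(2w)=2w$, $a(3w)=3w$; $b(0w)=2\,b(w)$, $b(2w)=0w$, $b(1w)=1w$, $b(3w)=3w$; $c(0w)=3\,c(w)$, $c(3w)=0w$, $c(1w)=1w$, $c(2w)=2w$. For $n\ge1$ let $A_n=a_n+a_n^{-1}+b_n+b_n^{-1}+c_n+c_n^{-1}$, where $a_n,b_n,c_n$ are the permutation matrices of $a,b,c$ on $X^n$, let $P_n(\lambda)=\det(\lambda I-A_n)$ and $f(\lambda)=\lambda^2-4\lambda-6$, with $f^{\circ i}$ the $i$-fold iterate ($f^{\circ 0}=\mathrm{id}$). Then for every $n\ge1$ $$P_n(\lambda)=(\lambda-6)\prod_{i=0}^{n-1}\bigl(f^{\circ i}(\lambda)+2\bigr)\prod_{i=0}^{n-1}\bigl(f^{\circ i}(\lambda)-4\bigr)^{2\cdot 4^{\,n-i-1}}.$$ In particular, the spectrum of $A_n$ (as a multiset) is the disjoint union of $\{6\}$, the sets $f^{-i}(-2)$ for $i=0,\dots,n-1$ (each element with multiplicity one), and the sets $f^{-i}(4)$ for $i=0,\dots,n-1$, each element of $f^{-i}(4)$ counted with multiplicity $2\cdot 4^{n-i-1}$.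
   Context: $f^{-i}(x)$ denotes the set of $\lambda\in\mathbb{C}$ with $f^{\circ i}(\lambda)=x$. $A_n$ is the adjacency matrix of the $n$-th Schreier graph of the group generated by $a,b,c$. *)

From HB Require Import structures.
From mathcomp Require Import all_boot all_order all_algebra all_field.
Set Implicit Arguments. Unset Strict Implicit. Unset Printing Implicit Defensive.
Import Order.TTheory GRing.Theory Num.Theory.
Local Open Scope ring_scope.

Definition x0 : 'I_4 := @Ordinal 4 0 isT.
Definition x1 : 'I_4 := @Ordinal 4 1 isT.
Definition x2 : 'I_4 := @Ordinal 4 2 isT.
Definition x3 : 'I_4 := @Ordinal 4 3 isT.

Fixpoint gen (k : 'I_4) (w : seq 'I_4) : seq 'I_4 :=
  match w with
  | [::] => [::]
  | x :: w' => if x == x0 then k :: gen k w'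
               else if x == k then x0 :: w'
               else x :: w'
  end.

Definition aw := gen x1.
Definition bw := gen x2.
Definition cw := gen x3.

Definition N (n : nat) : nat := #|{: n.-tuple 'I_4}|.

Definition permM (g : seq 'I_4 -> seq 'I_4) (n : nat) : 'M[int]_(N n) :=
  \matrix_(i, j) ((g (val (enum_val i : n.-tuple 'I_4))
                   == val (enum_val j : n.-tuple 'I_4)) %:R : int).

Definition A (n : nat) : 'M[int]_(N n) :=
  permM aw n + invmx (permM aw n) + permM bw n + invmx (permM bw n)
  + permM cw n + invmx (permM cw n).

Definition P (n : nat) : {poly int} := char_poly (A n).

Definition f : {poly int} := 'X^2 - 4%:P * 'X - 6%:P.
Definition fiter (i : nat) : {poly int} := iter i (fun p => f \Po p) 'X.

(* Split X^(n+1) into the words 0u and the words xu with x <> 0.  No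
   generator maps a word 0u to a word 0v, and a word xu with x <> 0 is fixed
   by four of the six maps a^±1, b^±1, c^±1.  Hence
   A_(n+1) = [[0, B], [B^T, 4]], where, writing x also for the generator
   a, b or c attached to the letter x = 1, 2, 3, the entry of B at (0u, xv)
   is [x(u) = v] + [u = v]; summing over x gives B B^T = 6 + A_n.  A Schur complement then yields
   P_(n+1)(λ) (λ-4)^(4^n) = P_n(f(λ)) (λ-4)^(3·4^n), i.e.
   P_(n+1) = (P_n ∘ f) (λ-4)^(2·4^n), which unrolls to the product formula
   because f(y) - 6 = (y - 6)(y + 2).
   For the multiplicities: (f^i)' = ∏_(j<i) (2 f^j - 4) vanishes at λ only if
   f^j(λ) = 2 for some j < i, and then f^i(λ) lies in the forward orbit
   -10, 134, ... of the critical point 2, which avoids -2 and 4.  So all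
   roots of f^i + 2 and f^i - 4 are simple. *)

From Pilot Require Import Defs.
From HB Require Import structures.
From mathcomp Require Import all_boot all_order all_algebra all_field.
From mathcomp Require Import fingroup perm ring zify.
Set Implicit Arguments. Unset Strict Implicit. Unset Printing Implicit Defensive.
Import Order.TTheory GRing.Theory Num.Theory.
Local Open Scope ring_scope.

Lemma sum_enum_val (R : nmodType) (T : finType) (F : T -> R) :
  \sum_(i < #|T|) F (enum_val i) = \sum_t F t.
Proof. by rewrite -(big_enum_val F); apply: eq_bigl. Qed.

Lemma sum_delta (R : pzSemiRingType) (T : finType) (t : T) (F : T -> R) :
  \sum_w (t == w)%:R * F w = F t.
Proof.
rewrite (bigD1 t) //= eqxx mul1r big1 ?addr0 // => w /negbTE.
by rewrite eq_sym => ->; rewrite mul0r.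
Qed.

Lemma det_reindex (R : comNzRingType) (T : finType) (M : T -> T -> R) p q
    (e1 : 'I_p -> T) (e2 : 'I_q -> T) :
  p = q -> p = #|T| -> injective e1 -> injective e2 ->
  \det (\matrix_(i, j) M (e1 i) (e1 j)) = \det (\matrix_(i, j) M (e2 i) (e2 j)).
Proof.
move=> epq; subst q => pT e1_inj e2_inj.
have [e1' e1K e1'K] : bijective e1 by apply: inj_card_bij; rewrite // card_ord pT.
have s_inj : injective (e1' \o e2) by move=> i j /= /(congr1 e1); rewrite !e1'K => /e2_inj.
pose s := perm s_inj.
have -> : \matrix_(i, j) M (e2 i) (e2 j)
    = row_perm s (col_perm s (\matrix_(i, j) M (e1 i) (e1 j))).
  by apply/matrixP => i j; rewrite !mxE !permE /= !e1'K.
rewrite row_permE col_permE !det_mulmx mulrCA -det_mulmx -perm_mxM mulgV perm_mx1 det1.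
by rewrite mulr1.
Qed.

Lemma det_block_scalar (R : comNzRingType) m k (l d : R) (B : 'M[R]_(m, k)) :
  \det (block_mx l%:M (- B) (- B^T) d%:M) * d ^+ m = \det ((l * d)%:M - B *m B^T) * d ^+ k.
Proof.
have := det_mulmx (block_mx l%:M (- B) (- B^T) d%:M) (block_mx d%:M 0 B^T 1%:M).
rewrite mulmx_block !mulmx0 !mulmx1 !add0r.
have -> : - B^T *m d%:M + d%:M *m B^T = 0.
  by rewrite mulNmx mul_mx_scalar mul_scalar_mx addNr.
rewrite -scalar_mxM det_ublock det_lblock !det_scalar expr1n mulr1.
by move=> <-; rewrite mulNmx.
Qed.

Section PolyMultiplicity.

Variable F : fieldType.
Implicit Types (p : {poly F}) (x : F).

Lemma mup_simple_root p x : root p x -> p^`().[x] != 0 -> mup x p = 1%N.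
Proof.
move=> px dpx; have p_neq0 : p != 0 by apply: contraNneq dpx => ->; rewrite deriv0 horner0.
apply/eqP; rewrite eqn_leq mup_leq // (mup_geq _ _ p_neq0) expr1 dvdp_XsubCl px andbT.
apply/negP => /dvdpP [q p_eq]; move: dpx; rewrite p_eq.
rewrite expr2 !derivM !(hornerD, hornerM, hornerN, hornerX, hornerC) subrr.
by apply/negP/negPn/eqP; ring.
Qed.

Lemma mup_exp p x e : p != 0 -> mup x (p ^+ e) = (mup x p * e)%N.
Proof.
move=> p_neq0; elim: e => [|e IH]; first by rewrite expr0 muln0 mupNroot // root1.
by rewrite exprS mupM ?expf_neq0 // IH mulnS.
Qed.

Lemma mup_prod n (q : 'I_n -> {poly F}) x : (forall i, q i != 0) ->
  mup x (\prod_(i < n) q i) = (\sum_(i < n) mup x (q i))%N.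
Proof.
elim: n q => [|n IH] q q_neq0; first by rewrite !big_ord0 mupNroot // root1.
rewrite !big_ord_recr /= mupM ?IH //; exact/prodf_neq0.
Qed.

End PolyMultiplicity.

Lemma size_gen k w : size (gen k w) = size w.
Proof. by elim: w => //= x w IH; case: ifP => _ /=; [rewrite IH | case: ifP]. Qed.

Lemma gen_inj k : k != x0 -> injective (gen k).
Proof.
move=> k0 u; elim: u => [|x u IH] [|y v] //=.
- by case: (y == x0) => //; case: (y == k).
- by case: (x == x0) => //; case: (x == k).
case: (eqVneq x x0) => [->|hx]; case: (eqVneq y x0) => [->|hy] //=.
- by case=> /IH ->.
- case: (eqVneq y k) => [->|hyk] [].
  + by move=> /eqP; rewrite (negbTE k0).
  + by move=> e; rewrite e eqxx in hyk.
- case: (eqVneq x k) => [->|hxk] [].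
  + by move=> /eqP; rewrite eq_sym (negbTE k0).
  + by move=> e; rewrite e eqxx in hxk.
- case: (eqVneq x k) => [->|hxk]; case: (eqVneq y k) => [->|hyk] //.
  + by case=> ->.
  + by case=> e; rewrite -e eqxx in hy.
  + by case=> e; rewrite e eqxx in hx.
Qed.

Lemma size_gen_tuple k n (u : n.-tuple 'I_4) : size (gen k u) == n.
Proof. by rewrite size_gen size_tuple. Qed.

Definition gen_tuple k n (u : n.-tuple 'I_4) : n.-tuple 'I_4 := Tuple (size_gen_tuple k u).

Lemma gen_tuple_inj k n : k != x0 -> injective (@gen_tuple k n).
Proof. by move=> k0 u v /(congr1 val) /(gen_inj k0) /val_inj. Qed.

Lemma eq_gen_tuple k n (u v : n.-tuple 'I_4) : (gen k u == v) = (gen_tuple k u == v).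
Proof. by []. Qed.

Lemma permM_mulmx_tr k n : k != x0 -> Defs.permM (gen k) n *m (Defs.permM (gen k) n)^T = 1%:M.
Proof.
move=> k0; apply/matrixP => i j; rewrite !mxE.
under eq_bigr => l _ do rewrite !mxE !eq_gen_tuple.
rewrite (sum_enum_val (fun w =>
  (gen_tuple k (enum_val i) == w)%:R * (gen_tuple k (enum_val j) == w)%:R)).
by rewrite sum_delta eq_sym (inj_eq (gen_tuple_inj k0)) (inj_eq enum_val_inj).
Qed.

Lemma invmx_permM k n : k != x0 -> invmx (Defs.permM (gen k) n) = (Defs.permM (gen k) n)^T.
Proof.
move=> k0; have PPt := permM_mulmx_tr n k0; have [Punit _] := mulmx1_unit PPt.
by rewrite -[RHS]mul1mx -(mulVmx Punit) -mulmxA PPt mulmx1.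
Qed.

Definition adj (u v : seq 'I_4) : int :=
  (gen x1 u == v)%:R + (gen x1 v == u)%:R + (gen x2 u == v)%:R + (gen x2 v == u)%:R
  + (gen x3 u == v)%:R + (gen x3 v == u)%:R.

Lemma A_adjE n :
  A n = \matrix_(i < N n, j < N n) adj (enum_val i : n.-tuple _) (enum_val j : n.-tuple _).
Proof. by rewrite /A /aw /bw /cw !invmx_permM //; apply/matrixP => i j; rewrite !mxE. Qed.

Definition char_entry n (u v : n.-tuple 'I_4) : {poly int} := (u == v)%:R * 'X - (adj u v)%:P.

Lemma P_char_entry n :
  P n = \det (\matrix_(i < N n, j < N n)
                char_entry (enum_val i : n.-tuple _) (enum_val j : n.-tuple _)).
Proof.
rewrite /P /char_poly A_adjE; congr (\det _); apply/matrixP => i j.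
by rewrite /char_poly_mx !mxE /char_entry (inj_eq enum_val_inj) mulr_natl.
Qed.

(* A word of length n+1 not starting with 0 is encoded by a pair (x, w),
   its first letter being lift x0 x. *)
Definition Nlift n : nat := #|{: 'I_3 * n.-tuple 'I_4}|.

Lemma N_exp n : N n = (4 ^ n)%N.
Proof. by rewrite /N card_tuple card_ord. Qed.

Lemma Nlift_exp n : Nlift n = (3 * 4 ^ n)%N.
Proof. by rewrite /Nlift card_prod card_tuple !card_ord. Qed.

Lemma N_S n : N n.+1 = (N n + Nlift n)%N.
Proof. by rewrite N_exp Nlift_exp N_exp expnS mulSn. Qed.

Definition split_word n (i : 'I_(N n + Nlift n)) : n.+1.-tuple 'I_4 :=
  match split i with
  | inl a => [tuple of x0 :: (enum_val a : n.-tuple 'I_4)]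
  | inr b => [tuple of lift x0 (enum_val b : 'I_3 * n.-tuple 'I_4).1
                       :: (enum_val b : 'I_3 * n.-tuple 'I_4).2]
  end.

Lemma split_word_inj n : injective (@split_word n).
Proof.
move=> i j; rewrite /split_word -[i]splitK -[j]splitK !unsplitK.
case: (split i) => a; case: (split j) => b /(congr1 val) /= /eqP;
  rewrite eqseq_cons => /andP [x_eq /eqP /val_inj w_eq].
- by move: w_eq => /enum_val_inj ->.
- by rewrite (negbTE (neq_lift _ _)) in x_eq.
- by rewrite eq_sym (negbTE (neq_lift _ _)) in x_eq.
move: x_eq => /eqP /lift_inj x_eq; congr (unsplit (inr _)); apply: enum_val_inj.
by rewrite [LHS]surjective_pairing [RHS]surjective_pairing x_eq w_eq.
Qed.

Lemma liftE (x : 'I_3) : lift x0 x = nth x0 [:: x1; x2; x3] x.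
Proof. by apply/val_inj; case: x => [[|[|[|]]] ?]. Qed.

Definition b_entry (x : 'I_3) (u v : seq 'I_4) : int :=
  (gen (lift x0 x) u == v)%:R + (u == v)%:R.

Lemma adj_cons0 u v : adj (x0 :: u) (x0 :: v) = 0.
Proof. by []. Qed.

Lemma adj_cons0_lift x u v : adj (x0 :: u) (lift x0 x :: v) = b_entry x u v.
Proof.
rewrite /b_entry liftE; case: x => [[|[|[|//]]] ?];
  by rewrite /adj /= !eqseq_cons /= ?addr0 ?add0r ?(eq_sym v).
Qed.

Lemma adj_lift_cons0 x u v : adj (lift x0 x :: v) (x0 :: u) = b_entry x u v.
Proof.
rewrite /b_entry liftE; case: x => [[|[|[|//]]] ?];
  by rewrite /adj /= !eqseq_cons /= ?addr0 ?add0r addrC (eq_sym v).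
Qed.

Lemma adj_lift_lift x y u v :
  adj (lift x0 x :: u) (lift x0 y :: v) = ((x == y) && (u == v))%:R *+ 4.
Proof.
rewrite !liftE; case: x => [[|[|[|//]]] ?]; case: y => [[|[|[|//]]] ?];
  rewrite /adj /= ?eqseq_cons /= ?addr0 ?add0r //;
  by rewrite (eq_sym v); case: (u == v).
Qed.

Definition Bmx n : 'M[int]_(N n, Nlift n) :=
  \matrix_(i, j) b_entry (enum_val j : 'I_3 * n.-tuple 'I_4).1
                         (enum_val i : n.-tuple 'I_4) (enum_val j : 'I_3 * n.-tuple 'I_4).2.

Lemma sum_b_entry_mul x n (u v : n.-tuple 'I_4) :
  \sum_(w : n.-tuple 'I_4) b_entry x u w * b_entry x v w
  = (u == v)%:R *+ 2 + (gen (lift x0 x) u == v)%:R + (gen (lift x0 x) v == u)%:R.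
Proof.
have k0 : lift x0 x != x0 by rewrite eq_sym neq_lift.
under eq_bigr => w _ do rewrite /b_entry !eq_gen_tuple !val_eqE mulrDl !mulrDr.
rewrite !big_split /= !sum_delta !(inj_eq (gen_tuple_inj k0)) !eq_gen_tuple.
by rewrite (eq_sym v u) (eq_sym v) mulr2n; ring.
Qed.

Lemma Bmx_mul_tr n : Bmx n *m (Bmx n)^T = 6%:M + A n.
Proof.
apply/matrixP => i j; rewrite A_adjE !mxE.
under eq_bigr => l _ do rewrite !mxE.
rewrite (sum_enum_val (fun p : 'I_3 * n.-tuple 'I_4 =>
   b_entry p.1 (enum_val i : n.-tuple 'I_4) p.2 * b_entry p.1 (enum_val j : n.-tuple 'I_4) p.2)).
rewrite -(pair_bigA _ (fun x (w : n.-tuple 'I_4) => b_entry x (enum_val i : n.-tuple 'I_4) w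
                                 * b_entry x (enum_val j : n.-tuple 'I_4) w)) /=.
under eq_bigr => x _ do rewrite sum_b_entry_mul.
rewrite !big_ord_recr big_ord0 /= (inj_eq enum_val_inj) !liftE /= /adj.
by rewrite -mulr_natl; ring.
Qed.

Lemma char_entry_split n :
  \matrix_(i, j) char_entry (@split_word n i) (split_word j)
  = block_mx 'X%:M (- map_mx polyC (Bmx n)) (- map_mx polyC (Bmx n)^T) ('X - 4%:P)%:M.
Proof.
have val_cons x (w : n.-tuple 'I_4) : val [tuple of x :: w] = x :: val w by [].
apply/matrixP => i j; rewrite -[i]splitK -[j]splitK.
case: (split i) => a; case: (split j) => b;
  rewrite [in LHS]mxE /split_word !unsplitK ?block_mxEul ?block_mxEur ?block_mxEdl
    ?block_mxEdr !mxE /char_entry -val_eqE !val_cons eqseq_cons.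
- by rewrite adj_cons0 eqxx val_eqE (inj_eq enum_val_inj) subr0 mulr_natl.
- by rewrite adj_cons0_lift (negbTE (neq_lift _ _)) mul0r sub0r.
- by rewrite adj_lift_cons0 eq_sym (negbTE (neq_lift _ _)) mul0r sub0r.
rewrite adj_lift_lift (inj_eq (@lift_inj _ _)) val_eqE -xpair_eqE -!surjective_pairing.
by rewrite (inj_eq enum_val_inj); case: (a == b); rewrite ?mul1r // mul0r mul0rn subr0.
Qed.

Lemma char_poly_mx_comp_f m (M : 'M[int]_m) :
  map_mx (comp_poly f) (char_poly_mx M) = ('X * ('X - 4%:P))%:M - ((6%:P)%:M + map_mx polyC M).
Proof.
apply/matrixP => i j; rewrite !mxE; case: (i == j) => /=;
  rewrite ?mulr1n ?mulr0n ?comp_polyB ?comp_polyX ?comp_polyC ?comp_poly0 ?polyC0 /f;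
  ring.
Qed.

Lemma P_succ n : P n.+1 = (P n \Po f) * ('X - 4%:P) ^+ (2 * 4 ^ n).
Proof.
have split_det : P n.+1 = \det (\matrix_(i, j) char_entry (@split_word n i) (split_word j)).
  rewrite P_char_entry; apply: (det_reindex (@char_entry n.+1) (N_S n)) => //.
    exact: enum_val_inj.
  exact: split_word_inj.
have := det_block_scalar 'X ('X - 4%:P) (map_mx polyC (Bmx n)).
rewrite !map_trmx -char_entry_split -split_det -map_mxM Bmx_mul_tr map_mxD map_scalar_mx.
rewrite -char_poly_mx_comp_f det_map_mx -/(char_poly _) -/(P n) Nlift_exp N_exp.
have X4_neq0 : ('X - 4%:P) ^+ (4 ^ n) != 0 :> {poly int} by rewrite expf_neq0 // polyXsubC_eq0.
move=> det_eq; apply: (mulIf X4_neq0); rewrite det_eq -mulrA -exprD.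
by rewrite mulSn addnC.
Qed.

Lemma P_0 : P 0 = 'X - 6%:P.
Proof.
rewrite P_char_entry
  (det_reindex (@char_entry 0) (N_exp 0) (e1 := enum_val) (e2 := fun=> [tuple])) //.
- by rewrite det_mx11 mxE /char_entry eqxx mul1r.
- exact: enum_val_inj.
- by move=> i j _; rewrite !ord1.
Qed.

Lemma f_comp p : f \Po p = p ^+ 2 - 4%:P * p - 6%:P.
Proof. by rewrite /f !comp_polyB !comp_polyM !comp_polyC comp_polyX expr2. Qed.

Lemma fiter_comp i q : fiter i \Po q = iter i (fun p => f \Po p) q.
Proof.
elim: i => [|i IH]; first by rewrite /fiter /= comp_polyX.
by rewrite /fiter /= -comp_polyA -/(fiter i) IH.
Qed.

Lemma fiterD i j : fiter (i + j) = fiter i \Po fiter j.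
Proof. by rewrite fiter_comp /fiter iterD. Qed.

Lemma fiterSr i : fiter i.+1 = fiter i \Po f.
Proof. by rewrite -addn1 fiterD /fiter /= comp_polyXr. Qed.

Lemma fiter_sub6 n : fiter n - 6%:P = ('X - 6%:P) * \prod_(i < n) (fiter i + 2%:P).
Proof.
elim: n => [|n IH]; first by rewrite big_ord0 mulr1.
by rewrite big_ord_recr /= mulrA -IH /fiter /= -/(fiter n) f_comp !polyC_natr; ring.
Qed.

Lemma P_fiter n :
  P n = (fiter n - 6%:P) * \prod_(i < n) (fiter i - 4%:P) ^+ (2 * 4 ^ (n - i - 1)).
Proof.
elim: n => [|n IH]; first by rewrite P_0 big_ord0 mulr1.
rewrite P_succ IH rmorphM rmorph_prod /= big_ord_recl /= subn1 subn0 /=.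
rewrite comp_polyB comp_polyC -fiterSr.
under eq_bigr => i _ do rewrite rmorphXn /= comp_polyB comp_polyC -fiterSr.
under [in RHS]eq_bigr => i _ do rewrite subSS.
by rewrite /fiter /=; ring.
Qed.

Lemma fiter_orbit2 k : (fiter k.+1).[2] = -10 \/ 6 < (fiter k.+1).[2].
Proof.
have fiterSE i : (fiter i.+1).[2] = f.[(fiter i).[2]] by rewrite /fiter /= horner_comp.
elim: k => [|k IH]; first by left; rewrite fiterSE /fiter /= /f !hornerE.
right; rewrite fiterSE /f !hornerE; case: IH => [->|]; first by [].
move: (fiter k.+1).[2] => z z_gt6; nia.
Qed.

Lemma fiter_orbit2_neq k (c : int) : -10 < c < 6 -> (fiter k.+1).[2] != c.
Proof. by move=> /andP[c_gt c_lt]; case: (fiter_orbit2 k) => [->|]; lia. Qed.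

Lemma deriv_fiterS i : (fiter i.+1)^`() = (fiter i *+ 2 - 4%:P) * (fiter i)^`().
Proof.
rewrite /fiter /= -/(fiter i) deriv_comp /f !derivE; congr (_ * _).
by rewrite !comp_polyB !comp_polyD !comp_polyM !comp_polyC comp_polyX ?comp_poly0; ring.
Qed.

Lemma fiter_horner6 i : (fiter i).[6] = 6.
Proof.
by elim: i => [|i IH]; rewrite /fiter /= ?hornerX // horner_comp -/(fiter i) IH /f !hornerE.
Qed.

Section Multiplicities.

Variable R : numFieldType.
Implicit Types (x : R).

Local Notation fiterR i := (map_poly (intr : int -> R) (fiter i)).

Lemma fiterR_after2 k j x : (fiterR j).[x] = 2 -> (fiterR (k.+1 + j)).[x] = (fiter k.+1).[2]%:~R.
Proof. by move=> fj2; rewrite fiterD map_comp_poly horner_comp fj2 -[2]/(2%:~R) horner_map. Qed.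

Lemma deriv_fiterR_neq0 i x :
  (forall j, (j < i)%N -> (fiterR j).[x] != 2) -> (fiterR i)^`().[x] != 0.
Proof.
elim: i => [|i IH] not2; first by rewrite map_polyX derivX hornerC oner_neq0.
rewrite deriv_map deriv_fiterS rmorphM /= -deriv_map hornerM mulf_neq0 //; last first.
  by apply: IH => j ji; apply: not2; rewrite ltnS ltnW.
rewrite rmorphB rmorphMn /= map_polyC /= !hornerE.
apply: contra (not2 i (ltnSn i)) => /eqP fi2; apply/eqP.
have : ((fiterR i).[x] - 2) *+ 2 = 0 by rewrite -[RHS]fi2; ring.
by move/eqP; rewrite mulrn_eq0 /= subr_eq0 => /eqP.
Qed.

Lemma mup_fiterR_subC i x (c : int) : -10 < c < 6 ->
  mup x (fiterR i - (c%:~R)%:P) = ((fiterR i).[x] == c%:~R : nat).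
Proof.
move=> c_range; have [fic|fic] := eqVneq; last first.
  by apply: mupNroot; rewrite /root !hornerE subr_eq0.
apply: mup_simple_root; first by rewrite /root !hornerE fic subrr.
rewrite derivB derivC subr0; apply: deriv_fiterR_neq0 => j ji; apply/eqP => fj2.
have i_eq : i = ((i - j.+1).+1 + j)%N by rewrite addSnnS subnK.
have := fiter_orbit2_neq (i - j.+1) c_range.
by rewrite -(eqr_int R) -(fiterR_after2 _ fj2) -i_eq fic eqxx.
Qed.

Lemma fiterR_subC_neq0 i (c : int) : c != 6 -> fiterR i - (c%:~R)%:P != 0.
Proof.
move=> c_neq6; have at6 : (fiterR i - (c%:~R)%:P).[6] = (6 - c)%:~R.
  by rewrite !hornerE -[6 in LHS]/(6%:~R) horner_map fiter_horner6 rmorphB.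
apply: contra_neq c_neq6 => p0; apply/eqP; rewrite eq_sym -subr_eq0 -(eqr_int R).
by rewrite -at6 p0 horner0.
Qed.

Lemma mup_map_P n x :
  mup x (map_poly intr (P n)) =
    ((x == 6%R) + \sum_(i < n) ((fiterR i).[x] == (-2)%R : nat)
     + \sum_(i < n) ((fiterR i).[x] == 4%R) * (2 * 4 ^ (n - i - 1)))%N.
Proof.
have X_sub6 : map_poly intr ('X - 6%:P) = 'X - ((6%:~R)%:P) :> {poly R}.
  by rewrite rmorphB /= map_polyX map_polyC.
have fiter_add2 i : map_poly intr (fiter i + 2%:P) = fiterR i - (((-2)%:~R)%:P).
  by rewrite rmorphD /= map_polyC polyCN opprK.
have fiter_sub4 i e : map_poly intr ((fiter i - 4%:P) ^+ e) = (fiterR i - (4%:~R)%:P) ^+ e.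
  by rewrite rmorphXn rmorphB /= map_polyC.
have prod2_neq0 : \prod_(i < n) (fiterR i - ((-2)%:~R)%:P) != 0.
  by apply/prodf_neq0 => i _; apply: fiterR_subC_neq0.
have prod4_neq0 : \prod_(i < n) (fiterR i - (4%:~R)%:P) ^+ (2 * 4 ^ (n - i - 1)) != 0.
  by apply/prodf_neq0 => i _; rewrite expf_neq0 // fiterR_subC_neq0.
rewrite P_fiter fiter_sub6 !rmorphM !rmorph_prod /= X_sub6.
rewrite (eq_bigr _ (fun (i : 'I_n) _ => fiter_add2 i)).
rewrite (eq_bigr _ (fun (i : 'I_n) _ => fiter_sub4 i _)).
rewrite !mupM ?mulf_neq0 ?polyXsubC_eq0 // -(expr1 ('X - _)) mup_XsubCX eq_sym.
rewrite mup_prod => [|i]; last exact: fiterR_subC_neq0.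
rewrite mup_prod => [|i]; last by rewrite expf_neq0 // fiterR_subC_neq0.
rewrite (eq_bigr _ (fun (i : 'I_n) _ => mup_fiterR_subC i x (c := -2) isT)).
rewrite (eq_bigr _ (fun (i : 'I_n) _ => mup_exp x _ (fiterR_subC_neq0 i (c := 4) isT))).
by rewrite (eq_bigr _ (fun (i : 'I_n) _ =>
  congr1 (muln^~ _) (mup_fiterR_subC i x (c := 4) isT))).
Qed.

End Multiplicities.

Theorem theorem3p4 (n : nat) : (1 <= n)%N ->
  P n = ('X - 6%:P) * (\prod_(i < n) (fiter i + 2%:P))
        * (\prod_(i < n) (fiter i - 4%:P) ^+ (2 * 4 ^ (n - i - 1))%N)
  /\
  (forall lam : algC,
     mup lam (map_poly intr (P n)) =
       ((lam == 6%R) : nat)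
       + \sum_(i < n) (((map_poly intr (fiter i)).[lam] == (-2)%R) : nat)
       + \sum_(i < n) (((map_poly intr (fiter i)).[lam] == 4%R) * (2 * 4 ^ (n - i - 1)))%N)%N.
Proof.
(* The formula holds for n = 0 as well, where both sides are 'X - 6. *)
move=> _; split; first by rewrite P_fiter fiter_sub6.
exact: mup_map_P.
Qed.
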